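(* Let $I\subseteq\mathbb{R}$ be an interval, let $h:J\to\mathbb{R}$ be a positive function on an interval $J\supseteq(0,1)$, let $f\in SX(h,I)$, let $a,b\in I$ with $a<b$, and let $f\in L_{1}[a,b]$. Then for every $\alpha>0$, $$\frac{1}{\alpha h\left(\frac{1}{2}\right)}f\left(\frac{a+b}{2}\right)\leq\frac{\Gamma(\alpha)}{(b-a)^{\alpha}}\left[J_{a^{+}}^{\alpha}f(b)+J_{b^{-}}^{\alpha}f(a)\right]\leq\left[f(a)+f(b)\right]\int_{0}^{1}t^{\alpha-1}\left[h(t)+h(1-t)\right]dt.$$
   Context: Given a positive function $h:J\to\mathbb{R}$, a function $f:I\to\mathbb{R}$ belongs to the class $SX(h,I)$ ($h$-convex functions) if $f$ is nonnegative and $f(\lambda x+(1-\lambda)y)\leq h(\lambda)f(x)+h(1-\lambda)f(y)$ for all $x,y\in I$ and $\lambda\in(0,1)$. For $f\in L_1[a,b]$ and $\alpha>0$, the Riemann–Liouville fractional integrals are $J_{a^{+}}^{\alpha}f(x)=\frac{1}{\Gamma(\alpha)}\int_a^x (x-t)^{\alpha-1}f(t)\,dt$ for $x>a$ and $J_{b^{-}}^{\alpha}f(x)=\frac{1}{\Gamma(\alpha)}\int_x^b (t-x)^{\alpha-1}f(t)\,dt$ for $x<b$, where $\Gamma(\alpha)=\int_0^\infty e^{-u}u^{\alpha-1}\,du$. *)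

From HB Require Import structures.
From mathcomp Require Import all_boot all_order all_algebra.
From mathcomp Require Import all_classical all_reals all_analysis.
Set Implicit Arguments. Unset Strict Implicit. Unset Printing Implicit Defensive.
Import Order.TTheory GRing.Theory Num.Theory.
Import numFieldNormedType.Exports.
Local Open Scope classical_set_scope.
Local Open Scope ring_scope.

Definition SX {R : realType} (h : R -> R) (I : set R) (f : R -> R) : Prop :=
  (forall x, I x -> 0 <= f x) /\
  (forall x y l, I x -> I y -> 0 < l < 1 ->
     f (l * x + (1 - l) * y) <= h l * f x + h (1 - l) * f y).

Definition Gamma {R : realType} (alpha : R) : R :=
  fine (\int[@lebesgue_measure R]_(u in `]0%R, +oo[)
          (expR (- u) * u `^ (alpha - 1))%:E)%E.

(* Riemann-Liouville fractional integrals (values in \bar R; integrands are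
   nonnegative in our use, so the value is always meaningful) *)
Definition RL_left {R : realType} (alpha a : R) (f : R -> R) (x : R) : \bar R :=
  ((Gamma alpha)^-1)%:E *
  (\int[@lebesgue_measure R]_(t in `]a, x[) ((x - t) `^ (alpha - 1) * f t)%:E)%E.

Definition RL_right {R : realType} (alpha b : R) (f : R -> R) (x : R) : \bar R :=
  ((Gamma alpha)^-1)%:E *
  (\int[@lebesgue_measure R]_(t in `]x, b[) ((t - x) `^ (alpha - 1) * f t)%:E)%E.

(* After the substitutions t = a + (b - a) s and t = b - (b - a) s, both
   Riemann-Liouville integrals become integrals over ]0,1[ against s^(alpha-1),
   and the factor Gamma(alpha) / (b - a)^alpha cancels exactly (Gamma(alpha)
   being finite and positive), leaving
     int_0^1 s^(alpha-1) [f (a + (b - a) s) + f (b - (b - a) s)] ds.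
   The two points are symmetric about (a + b) / 2, so h-convexity with
   lambda = 1/2 bounds the integrand below by s^(alpha-1) f((a+b)/2) / h(1/2),
   whose integral is f((a+b)/2) / (alpha h(1/2)); h-convexity with lambda = s
   and lambda = 1 - s bounds it above by s^(alpha-1) (f a + f b) (h s + h (1-s)). *)

From HB Require Import structures.
From mathcomp Require Import all_boot all_order all_algebra.
From mathcomp Require Import all_classical all_reals all_analysis.
From mathcomp Require Import measurable_realfun ring lra.
Import Order.TTheory GRing.Theory Num.Theory.
Import numFieldNormedType.Exports.
Local Open Scope classical_set_scope.
Local Open Scope ring_scope.

Section lebesgue_change_of_variables.
Context {R : realType}.
Local Notation mu := (@lebesgue_measure R).

Lemma ge0_le_integral_nonmeasurable (D : set R) (f1 f2 : R -> \bar R) :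
  (forall x, D x -> (0 <= f1 x)%E) -> (forall x, D x -> (f1 x <= f2 x)%E) ->
  (\int[mu]_(x in D) f1 x <= \int[mu]_(x in D) f2 x)%E.
Proof.
move=> f10 f12.
have f20 x : D x -> (0 <= f2 x)%E by move=> Dx; exact: le_trans (f10 x Dx) (f12 x Dx).
rewrite !ge0_integralE//; apply: ereal_sup_le => _ [g /= gf <-].
exists g => //= x; apply: le_trans (gf x) _.
by rewrite /patch; case: ifPn => // /set_mem; exact: f12.
Qed.

Lemma ge0_le_integral_scaled (D : set R) (f g : R -> \bar R) (k : R) :
  measurable D -> measurable_fun D f -> 0 <= k ->
  (forall x, D x -> (0 <= f x)%E) -> (forall x, D x -> (0 <= g x)%E) ->
  (forall x, D x -> (f x <= k%:E * g x)%E) ->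
  (\int[mu]_(x in D) f x <= k%:E * \int[mu]_(x in D) g x)%E.
Proof.
move=> mD mf; rewrite le0r => /predU1P[-> f0 _ fg|k0 f0 g0 fg].
  rewrite mul0e -(integral0 mu D); apply: ge0_le_integral_nonmeasurable => // x Dx.
  by have := fg x Dx; rewrite mul0e.
rewrite -lee_pdivrMl // -ge0_integralZl_EFin //; last by rewrite invr_ge0 ltW.
apply: ge0_le_integral_nonmeasurable => x Dx.
  by rewrite mule_ge0 ?f0 // lee_fin invr_ge0 ltW.
by rewrite lee_pdivrMl //; exact: fg.
Qed.

Lemma lebesgue_measure_affine (c d : R) (A : set R) : 0 < c -> measurable A ->
  mu A = (c%:E * mu ((fun t => d + c * t)%R @^-1` A))%E.
Proof.
move=> c0 mA; pose phi t := d + c * t.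
have mphi : measurable_fun setT phi by apply: measurable_funD => //; exact: measurable_funM.
(* [pm] is a function of the measurability proof of [phi], on which the
   measure structure of the pushforward depends. *)
pose pm := mscale (NngNum (ltW c0)) (pushforward mu (phi : _ -> measurableTypeR R)).
change (mu A = pm mphi A); apply: lebesgue_measure_unique => // _ [[x y] _ <-].
change (mu `]x, y]%classic = c%:E * mu (phi @^-1` `]x, y]%classic))%E.
have -> : phi @^-1` `]x, y]%classic = `](x - d) / c, (y - d) / c]%classic.
  apply/seteqP; split => t /=; rewrite !in_itv /= /phi ltr_pdivrMr // ler_pdivlMr //;
    by rewrite ltrBlDl lerBrDl ![t * c]mulrC.
rewrite !lebesgue_measure_itv /= !lte_fin.
rewrite ltr_pM2r ?invr_gt0 // ltrBlDr subrK.
case: ifPn => _; last by rewrite mule0.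
by rewrite -EFinD -EFinM; congr EFin; field; exact: lt0r_neq0.
Qed.

Lemma ge0_integral_affine (c d : R) (D : set R) (g : R -> \bar R) : 0 < c ->
  measurable D -> measurable_fun setT g -> (forall x, (0 <= g x)%E) ->
  (\int[mu]_(x in D) g x =
   c%:E * \int[mu]_(t in (fun t => d + c * t)%R @^-1` D) g (d + c * t)%R)%E.
Proof.
move=> c0 mD mg g0; pose phi t := d + c * t.
have mphi : measurable_fun [set: measurableTypeR R] (phi : _ -> measurableTypeR R).
  by apply: measurable_funD => //; exact: measurable_funM.
rewrite -(ge0_integral_pushforward mphi) //; last exact: measurable_funTS.
rewrite [c%:E](_ : _ = (NngNum (ltW c0))%:num%:E) //.
rewrite -ge0_integral_mscale //; last exact: measurable_funTS.
apply: eq_measure_integral => A mA _ /=.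
exact: lebesgue_measure_affine.
Qed.

Lemma ge0_integral_opp (D : set R) (g : R -> \bar R) :
  measurable D -> measurable_fun setT g -> (forall x, (0 <= g x)%E) ->
  (\int[mu]_(x in D) g x = \int[mu]_(x in -%R @^-1` D) g (- x)%R)%E.
Proof.
move=> mD mg g0.
transitivity (\int[pushforward mu (-%R : _ -> measurableTypeR R)]_(x in D) g x)%E.
  by apply: eq_measure_integral => A mA _; exact/esym/lebesgue_measureN.
by rewrite ge0_integral_pushforward //; exact: measurable_funTS.
Qed.

Lemma ge0_integral_itv_oo_unit (a b : R) (g : R -> \bar R) : a < b ->
  measurable_fun setT g -> (forall x, (0 <= g x)%E) ->
  (\int[mu]_(x in `]a, b[) g x =
   (b - a)%:E * \int[mu]_(t in `]0%R, 1%R[) g (a + (b - a) * t)%R)%E.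
Proof.
move=> ab mg g0; rewrite (@ge0_integral_affine (b - a) a) ?subr_gt0 //.
congr (_ * integral _ _ _)%E; apply/seteqP; split => t /=; rewrite !in_itv /=.
  by move=> /andP[h1 h2]; apply/andP; split; nra.
by move=> /andP[h1 h2]; apply/andP; split; nra.
Qed.

Lemma ge0_integral_itv_oo_unit_rev (a b : R) (g : R -> \bar R) : a < b ->
  measurable_fun setT g -> (forall x, (0 <= g x)%E) ->
  (\int[mu]_(x in `]a, b[) g x =
   (b - a)%:E * \int[mu]_(t in `]0%R, 1%R[) g (b + (a - b) * t)%R)%E.
Proof.
move=> ab mg g0; rewrite ge0_integral_opp //.
rewrite (_ : -%R @^-1` _ = `](- b), (- a)[%classic); last first.
  by apply/seteqP; split => t /=; rewrite !in_itv /= => /andP[h1 h2]; apply/andP; split; lra.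
rewrite ge0_integral_itv_oo_unit ?ltrN2 //; last exact: measurableT_comp.
congr (_%:E * _)%E; first ring.
by apply: eq_integral => t _; congr g; ring.
Qed.

End lebesgue_change_of_variables.

Section powR_integrals.
Context {R : realType}.
Local Notation mu := (@lebesgue_measure R).

Lemma gt0_continuous_powR (r x : R) : 0 < x -> {for x, continuous (@powR R ^~ r)}.
Proof.
move=> x0; apply/differentiable_continuous; rewrite -derivable1_diffP.
by apply: derivable_powR; rewrite in_itv /= andbT.
Qed.

Lemma integral_powR_itv_c1 (al e : R) : 0 < al -> 0 < e < 1 ->
  (\int[mu]_(x in `[e, 1%R]) (x `^ (al - 1))%:E = ((1 - e `^ al) / al)%:E)%E.
Proof.
move=> al0 /andP[e0 e1].
have F'E (x : R) : 0 < x -> is_derive x 1 (fun y => al^-1 * y `^ al) (x `^ (al - 1)).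
  move=> x0; have := @is_deriveZ R R R (@powR R ^~ al) al^-1 x 1 _ (is_derive1_powR al x0).
  by rewrite /GRing.scale /= mulrA mulVf ?gt_eqF // mul1r.
have F'E_cont (x : R) : 0 < x -> {for x, continuous (fun y => al^-1 * y `^ al)}.
  by move=> /F'E[/derivable1_diffP/differentiable_continuous].
rewrite (@continuous_FTC2 _ _ (fun y => al^-1 * y `^ al)) //.
- by rewrite powR1 mulr1 -EFinB; congr EFin; lra.
- apply: continuous_in_subspaceT => x; rewrite inE /= in_itv /= => /andP[ex _].
  exact: gt0_continuous_powR (lt_le_trans e0 ex).
- split.
  + by move=> x; rewrite in_itv /= => /andP[ex _]; have [] := F'E x (lt_trans e0 ex).
  + exact/cvg_at_right_filter/F'E_cont.
  + exact/cvg_at_left_filter/F'E_cont.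
- move=> x; rewrite in_itv /= => /andP[ex _].
  by rewrite derive1E; have [_ ->] := F'E x (lt_trans e0 ex).
Qed.

Lemma bigcup_itv_c1_root (al : R) : 0 < al ->
  \bigcup_n `[(n.+2%:R^-1) `^ al^-1, 1%R]%classic = `]0%R, 1%R]%classic.
Proof.
move=> al0; apply/seteqP; split => x /=.
  move=> [n _]; rewrite /= !in_itv /= => /andP[ex ->]; rewrite andbT.
  by apply: lt_le_trans ex; rewrite powR_gt0 // invr_gt0.
rewrite in_itv /= => /andP[x0 x1].
exists (Num.truncn ((x `^ al)^-1)) => //; rewrite /= in_itv /= x1 andbT.
rewrite [leRHS](_ : x = (x `^ al) `^ al^-1); last first.
  by rewrite -powRrM divff ?powRr1 ?ltW // lt0r_neq0.
apply: ge0_ler_powR; rewrite ?invr_ge0 ?nnegrE ?powR_ge0 ?ltW //.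
rewrite -[ltRHS]invrK ltf_pV2 ?posrE ?ltr0n ?invr_gt0 ?powR_gt0 //.
by rewrite (lt_le_trans (truncnS_gt _)) // ler_nat.
Qed.

Lemma integral_powR_itv_oo01 (al : R) : 0 < al ->
  (\int[mu]_(x in `]0%R, 1%R[) (x `^ (al - 1))%:E = (al^-1)%:E)%E.
Proof.
move=> al0.
have mf : measurable_fun [set: R] (fun x : R => (x `^ (al - 1))%:E).
  by apply: measurableT_comp => //; exact: measurable_powR.
pose u n : R := n.+2%:R^-1.
have u01 n : 0 < u n < 1 by rewrite invr_gt0 ltr0n invf_lt1 // ltr1n.
pose e n : R := u n `^ al^-1.
have eal n : e n `^ al = u n.
  by rewrite -powRrM mulVf ?gt_eqF // powRr1 // ltW //; case/andP: (u01 n).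
have e01 n : 0 < e n < 1.
  have /andP[u0 u1] := u01 n.
  rewrite powR_gt0 //=; have := @gt0_ltr_powR R al^-1 _ (u n) 1.
  by rewrite powR1; apply; rewrite ?invr_gt0 ?nnegrE ?ltW.
pose F n := `[e n, 1%R]%classic.
have ndF : nondecreasing_seq F.
  apply/nondecreasing_seqP => n; rewrite subsetEset => x.
  rewrite /F /= !in_itv /= => /andP[ex ->]; rewrite andbT (le_trans _ ex) //.
  have [/andP[u0 _] /andP[u0' _]] := (u01 n, u01 n.+1).
  by rewrite ge0_ler_powR ?invr_ge0 ?nnegrE ?ltW // /u ltf_pV2 ?posrE ?ltr0n // ltr_nat.
have := @ge0_nondecreasing_set_cvg_integral _ _ _ _ _ mu ndF (fun i => measurable_itv _)
  (fun i => measurable_funTS mf) (fun i x _ => powR_ge0 _ _).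
rewrite bigcup_itv_c1_root // integral_itv_bndo_bndc; last exact: measurable_funTS.
move=> /(cvg_unique (@ereal_hausdorff R)); apply => /=.
under eq_fun do rewrite /F integral_powR_itv_c1 // eal.
apply: cvg_EFin; first exact: nearW.
have : (fun n => (1 - u n) / al) @ \oo --> (1 - 0) / al.
  apply: cvgMl; apply: cvgB; first exact: cvg_cst.
  by have := @cvg_harmonic R; rewrite -cvg_shiftS.
by rewrite subr0 mul1r.
Qed.

Lemma integral_powR_itv_oo01_ge (al k : R) (g : R -> R) : 0 < al -> 0 <= k ->
  (forall t, 0 < t < 1 -> k <= g t) ->
  ((k / al)%:E <= \int[mu]_(t in `]0%R, 1%R[) (t `^ (al - 1) * g t)%:E)%E.
Proof.
move=> al0 k0 kg; rewrite EFinM -integral_powR_itv_oo01 // -ge0_integralZl_EFin //.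
- apply: ge0_le_integral_nonmeasurable => t; rewrite /= in_itv /= => t01.
    by rewrite -EFinM lee_fin mulr_ge0 ?powR_ge0.
  by rewrite -EFinM lee_fin mulrC ler_wpM2l ?powR_ge0 ?kg.
- by move=> t _; rewrite lee_fin powR_ge0.
- by apply: measurable_funTS; apply: measurableT_comp => //; exact: measurable_powR.
Qed.

Lemma integral_powR_itv_oo01_le (al k : R) (g w : R -> R) :
  measurable_fun (`]0%R, 1%R[ : set R) g -> 0 <= k ->
  (forall t, 0 < t < 1 -> 0 <= g t) -> (forall t, 0 < t < 1 -> 0 <= w t) ->
  (forall t, 0 < t < 1 -> g t <= k * w t) ->
  (\int[mu]_(t in `]0%R, 1%R[) (t `^ (al - 1) * g t)%:E <=
   k%:E * \int[mu]_(t in `]0%R, 1%R[) (t `^ (al - 1) * w t)%:E)%E.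
Proof.
move=> mg k0 g0 w0 gw; apply: ge0_le_integral_scaled => //.
- apply/measurable_EFinP; apply: measurable_funM => //.
  exact: measurable_funTS (measurable_powR _).
- by move=> t; rewrite /= in_itv /= => t01; rewrite lee_fin mulr_ge0 ?powR_ge0 ?g0.
- by move=> t; rewrite /= in_itv /= => t01; rewrite lee_fin mulr_ge0 ?powR_ge0 ?w0.
move=> t; rewrite /= in_itv /= => t01.
by rewrite -EFinM lee_fin mulrCA ler_wpM2l ?powR_ge0 ?gw.
Qed.

End powR_integrals.

Section Gamma_function.
Context {R : realType}.
Local Notation mu := (@lebesgue_measure R).

Let gamma_integrand (al u : R) : \bar R := (expR (- u) * u `^ (al - 1))%:E.

Let gamma_integrand_ge0 (al u : R) : (0 <= gamma_integrand al u)%E.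
Proof. by rewrite lee_fin mulr_ge0 ?powR_ge0 // ltW // expR_gt0. Qed.

Let measurable_gamma_integrand (al : R) : measurable_fun setT (gamma_integrand al).
Proof.
apply: measurableT_comp => //; apply: measurable_funM; last exact: measurable_powR.
by apply: measurableT_comp => //; exact: measurable_expR.
Qed.

Lemma powR_le_expR_half (al u : R) : 0 < al -> 1 <= u ->
  u `^ (al - 1) <= expR (al * ln (2 * al) - al) * expR (u / 2).
Proof.
move=> al0 u1; have u0 : 0 < u by apply: lt_le_trans u1.
apply: (@le_trans _ _ (u `^ al)); first by apply: ler_powR => //; lra.
rewrite /powR gt_eqF // -expRD ler_expR.
have v0 : 0 < u / (2 * al) by rewrite divr_gt0 // mulr_gt0.
have := @le_ln1Dx R (u / (2 * al) - 1); rewrite [1 + _]addrC subrK => /(_ ltac:(lra)).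
rewrite lnM ?posrE ?invr_gt0 ?mulr_gt0 // lnV ?posrE ?mulr_gt0 // => ln_le.
have -> : u / 2 = al * (u / (2 * al)) by field; exact: lt0r_neq0.
nra.
Qed.

Let gamma_integral_head_bounds (al : R) : 0 < al ->
  ((expR (-1) / al)%:E <= \int[mu]_(u in `]0%R, 1%R[) gamma_integrand al u)%E /\
  (\int[mu]_(u in `]0%R, 1%R[) gamma_integrand al u <= (al^-1)%:E)%E.
Proof.
move=> al0.
have mp : measurable_fun setT (fun u : R => (u `^ (al - 1))%:E).
  by apply: measurableT_comp => //; exact: measurable_powR.
split.
- rewrite EFinM -(integral_powR_itv_oo01 al al0) -ge0_integralZl_EFin //; last 2 first.
  + by move=> u _; rewrite lee_fin powR_ge0.
  + exact: measurable_funTS.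
  apply: ge0_le_integral => //.
  + by move=> u _; rewrite -EFinM lee_fin mulr_ge0 ?powR_ge0 // ltW // expR_gt0.
  + by apply: measurable_funTS; exact: measurable_funeM.
  + exact: (measurable_funTS (measurable_gamma_integrand al)).
  move=> u; rewrite /= in_itv /= => /andP[u0 u1].
  by rewrite -EFinM lee_fin ler_wpM2r ?powR_ge0 // ler_expR; lra.
- rewrite -(integral_powR_itv_oo01 al al0).
  apply: ge0_le_integral => //; first exact: (measurable_funTS (measurable_gamma_integrand al)).
    exact: measurable_funTS.
  move=> u; rewrite /= in_itv /= => /andP[u0 u1].
  by rewrite lee_fin ler_piMl ?powR_ge0 // -expR0 ler_expR; lra.
Qed.

(* On [1, +oo[ the integrand is dominated by a multiple of the exponential
   density of rate 1/2, by [powR_le_expR_half]. *)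
Let gamma_integral_tail_le (al : R) : 0 < al ->
  (\int[mu]_(u in `[1%R, +oo[) gamma_integrand al u <=
   (2 * expR (al * ln (2 * al) - al))%:E)%E.
Proof.
move=> al0; set K := expR (al * ln (2 * al) - al).
have K0 : 0 < K by exact: expR_gt0.
have mpdf : measurable_fun setT (fun u : R => (exponential_pdf 2^-1 u)%:E).
  by apply: measurableT_comp => //; exact: measurable_exponential_pdf.
apply: (@le_trans _ _ (\int[mu]_(u in `[1%R, +oo[) ((2 * K)%:E * (exponential_pdf 2^-1 u)%:E))%E).
  apply: ge0_le_integral => //.
  - exact: (measurable_funTS (measurable_gamma_integrand al)).
  - by apply: measurable_funTS; exact: measurable_funeM.
  move=> u; rewrite /= in_itv /= andbT => u1.
  rewrite -EFinM exponential_pdfE ?(le_trans _ u1) // lee_fin.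
  have := @powR_le_expR_half al u al0 u1; rewrite -/K => pow_le.
  have -> : expR (- 2^-1 * u) = expR (- u) * expR (u / 2) by rewrite -expRD; congr expR; field.
  have := expR_gt0 (- u); have := expR_gt0 (u / 2); nra.
rewrite ge0_integralZl_EFin //; last 3 first.
- by move=> u _; rewrite lee_fin exponential_pdf_ge0.
- exact: measurable_funTS.
- by rewrite mulr_ge0 // ltW.
rewrite -[leRHS]mule1; apply: lee_wpmul2l; first by rewrite lee_fin mulr_ge0 // ltW.
rewrite -(integral_exponential_pdf (_ : 0 < 2^-1)) ?invr_gt0 //.
by apply: ge0_subset_integral => // u _; rewrite lee_fin exponential_pdf_ge0.
Qed.

(* [Gamma] is defined through [fine], which sends +oo to 0, so finiteness of
   the integral is part of the claim. *)
Lemma Gamma_gt0 (al : R) : 0 < al -> 0 < Gamma al.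
Proof.
move=> al0; rewrite /Gamma -/(gamma_integrand al).
have -> : `]0%R, +oo[%classic = `]0%R, 1%R[%classic `|` (`[1%R, +oo[%classic : set R).
  apply/seteqP; split => x /=; rewrite !in_itv /= ?andbT.
    by move=> x0; case: (ltP x 1) => x1; [left; rewrite x0|right].
  by move=> [/andP[]|/(lt_le_trans ltr01)].
rewrite ge0_integral_setU //; last 3 first.
- exact: (measurable_funTS (measurable_gamma_integrand al)).
- by move=> *; exact: gamma_integrand_ge0.
- apply/disj_setPS => x [] /=; rewrite !in_itv /= andbT => /andP[_ x1] x1'.
  by move: (lt_le_trans x1 x1'); rewrite ltxx.
have [head_ge head_le] := gamma_integral_head_bounds al al0.
have tail_le := gamma_integral_tail_le al al0.
have tail_ge0 : (0 <= \int[mu]_(u in `[1%R, +oo[) gamma_integrand al u)%E.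
  by apply: integral_ge0 => u _; exact: gamma_integrand_ge0.
have head_gt0 : (0 < \int[mu]_(u in `]0%R, 1%R[) gamma_integrand al u)%E.
  by apply: lt_le_trans head_ge; rewrite lte_fin divr_gt0 // expR_gt0.
have head_fin : (\int[mu]_(u in `]0%R, 1%R[) gamma_integrand al u)%E \is a fin_num.
  by rewrite ge0_fin_numE ?(le_lt_trans head_le) ?ltry // ltW.
have tail_fin : (\int[mu]_(u in `[1%R, +oo[) gamma_integrand al u)%E \is a fin_num.
  by rewrite ge0_fin_numE ?(le_lt_trans tail_le) ?ltry.
rewrite fineD // -lte_fin EFinD !fineK //.
exact: lt_le_trans head_gt0 (leeDl _ tail_ge0).
Qed.

End Gamma_function.

Section Riemann_Liouville_integrals.
Context {R : realType}.
Local Notation mu := (@lebesgue_measure R).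

Let ge0_integral_oo01_powR_scale (al c : R) (G : R -> R) : 0 < al -> 0 < c ->
  measurable_fun setT G -> (forall t, 0 <= G t) ->
  (c%:E * \int[mu]_(t in `]0%R, 1%R[) ((c * t) `^ (al - 1) * G t)%:E =
   (c `^ al)%:E * \int[mu]_(t in `]0%R, 1%R[) (t `^ (al - 1) * G t)%:E)%E.
Proof.
move=> al0 c0 mG G0.
under eq_integral => t /[1!inE] /andP[t0 _].
  rewrite powRM ?ltW // -mulrA EFinM; over.
rewrite ge0_integralZl_EFin ?powR_ge0 //; last 2 first.
- by move=> t _; rewrite lee_fin mulr_ge0 ?powR_ge0.
- apply: measurable_funTS; apply: measurableT_comp => //.
  exact: measurable_funM (measurable_powR _) mG.
by rewrite muleA -EFinM mulr_powRB1 // ltW.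
Qed.

Lemma integral_itv_oo_powR_subl (al a b : R) (F : R -> R) : 0 < al -> a < b ->
  measurable_fun setT F -> (forall x, 0 <= F x) ->
  (\int[mu]_(t in `]a, b[) ((t - a) `^ (al - 1) * F t)%:E =
   ((b - a) `^ al)%:E *
     \int[mu]_(t in `]0%R, 1%R[) (t `^ (al - 1) * F (a + (b - a) * t))%:E)%E.
Proof.
move=> al0 ab mF F0; have ba0 : 0 < b - a by rewrite subr_gt0.
have mk : measurable_fun setT (fun t : R => ((t - a) `^ (al - 1) * F t)%:E).
  apply: measurableT_comp => //; apply: measurable_funM => //.
  by apply: measurableT_comp (measurable_powR _) _; exact: measurable_funB.
have k0 (t : R) : (0 <= ((t - a) `^ (al - 1) * F t)%:E)%E.
  by rewrite lee_fin mulr_ge0 ?powR_ge0.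
rewrite (ge0_integral_itv_oo_unit _ _ _ ab mk k0).
under eq_integral do rewrite addrAC subrr add0r.
rewrite ge0_integral_oo01_powR_scale //.
by apply: measurableT_comp mF _; apply: measurable_funD => //; exact: measurable_funM.
Qed.

Lemma integral_itv_oo_powR_subr (al a b : R) (F : R -> R) : 0 < al -> a < b ->
  measurable_fun setT F -> (forall x, 0 <= F x) ->
  (\int[mu]_(t in `]a, b[) ((b - t) `^ (al - 1) * F t)%:E =
   ((b - a) `^ al)%:E *
     \int[mu]_(t in `]0%R, 1%R[) (t `^ (al - 1) * F (b + (a - b) * t))%:E)%E.
Proof.
move=> al0 ab mF F0; have ba0 : 0 < b - a by rewrite subr_gt0.
have mk : measurable_fun setT (fun t : R => ((b - t) `^ (al - 1) * F t)%:E).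
  apply: measurableT_comp => //; apply: measurable_funM => //.
  by apply: measurableT_comp (measurable_powR _) _; exact: measurable_funB.
have k0 (t : R) : (0 <= ((b - t) `^ (al - 1) * F t)%:E)%E.
  by rewrite lee_fin mulr_ge0 ?powR_ge0.
rewrite (ge0_integral_itv_oo_unit_rev _ _ _ ab mk k0).
under eq_integral do rewrite opprD addrA subrr add0r -mulNr opprB.
rewrite ge0_integral_oo01_powR_scale //.
by apply: measurableT_comp mF _; apply: measurable_funD => //; exact: measurable_funM.
Qed.

Lemma segment_points_in_itv (a b t : R) : a <= b -> 0 < t < 1 ->
  a <= a + (b - a) * t <= b /\ a <= b + (a - b) * t <= b.
Proof. by move=> ab /andP[t0 t1]; split; apply/andP; split; nra. Qed.

Lemma RL_sum_itv_oo01 (al a b : R) (f : R -> R) : 0 < al -> a < b ->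
  measurable_fun `[a, b] f -> (forall x, a <= x <= b -> 0 <= f x) ->
  ((Gamma al / (b - a) `^ al)%:E * (RL_left al a f b + RL_right al b f a) =
   \int[mu]_(t in `]0%R, 1%R[)
      (t `^ (al - 1) * (f (a + (b - a) * t) + f (b + (a - b) * t)))%:E)%E.
Proof.
(* The changes of variables need a nonnegative function measurable on all of R,
   hence the extension of f by 0 outside [a, b]. *)
move=> al0 ab mf f0; set F := f \_ `[a, b].
have mF : measurable_fun setT F by apply/(measurable_restrictT _ _).1.
have Ff x : a <= x <= b -> F x = f x by move=> xab; rewrite /F patchE mem_set.
have F0 x : 0 <= F x.
  by rewrite /F patchE; case: ifPn => // /set_mem; rewrite /= in_itv; exact: f0.
have FfJ (k : R -> R) : (\int[mu]_(t in `]a, b[) (k t * f t)%:E =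
    \int[mu]_(t in `]a, b[) (k t * F t)%:E)%E.
  by apply: eq_integral => t /[1!inE] /andP[ax xb]; rewrite Ff // !ltW.
rewrite /RL_left /RL_right !FfJ integral_itv_oo_powR_subr // integral_itv_oo_powR_subl //.
set JL := (\int[mu]_(t in _) _)%E; set JR := (\int[mu]_(t in _) _)%E.
have JL0 : (0 <= JL)%E by apply: integral_ge0 => t _; rewrite lee_fin mulr_ge0 ?powR_ge0.
have JR0 : (0 <= JR)%E by apply: integral_ge0 => t _; rewrite lee_fin mulr_ge0 ?powR_ge0.
have G0 : 0 < Gamma al by exact: Gamma_gt0.
have c0 : 0 < (b - a) `^ al by rewrite powR_gt0 // subr_gt0.
rewrite !muleA -!EFinM -ge0_muleDr // muleA -EFinM.
rewrite [_ * (_ * _)](_ : _ = 1) ?mul1e; last by field; rewrite !gt_eqF.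
rewrite -ge0_integralD //; last 4 first.
- by move=> t _; rewrite lee_fin mulr_ge0 ?powR_ge0.
- apply: measurable_funTS; apply: measurableT_comp => //; apply: measurable_funM.
    exact: measurable_powR.
  by apply: measurableT_comp mF _; apply: measurable_funD => //; exact: measurable_funM.
- by move=> t _; rewrite lee_fin mulr_ge0 ?powR_ge0.
- apply: measurable_funTS; apply: measurableT_comp => //; apply: measurable_funM.
    exact: measurable_powR.
  by apply: measurableT_comp mF _; apply: measurable_funD => //; exact: measurable_funM.
apply: eq_integral => t; rewrite inE /= in_itv /= => t01.
have [pa pb] := segment_points_in_itv a b t (ltW ab) t01.
by rewrite !Ff // -EFinD -mulrDr (addrC (f _)).
Qed.

Lemma measurable_fun_segment_ends (a b : R) (f : R -> R) : a <= b ->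
  measurable_fun `[a, b] f ->
  measurable_fun (`]0%R, 1%R[ : set R)
    (fun t => f (a + (b - a) * t) + f (b + (a - b) * t)).
Proof.
move=> ab mf.
have mcomp (c d : R) : (forall t, 0 < t < 1 -> a <= c + d * t <= b) ->
    measurable_fun (`]0%R, 1%R[ : set R) (fun t => f (c + d * t)).
  move=> cdab; apply: (measurable_comp (measurable_itv _) _ mf).
    by move=> _ [t + <-]; rewrite /= !in_itv /=; exact: cdab.
  by apply: measurable_funTS; apply: measurable_funD => //; exact: measurable_funM.
by apply: measurable_funD; apply: mcomp => t /(segment_points_in_itv a b t ab) [].
Qed.

End Riemann_Liouville_integrals.

Section h_convexity.
Context {R : realType} {h : R -> R} {I : set R} {f : R -> R}.
Hypothesis fSX : SX h I f.

Lemma SX_midpoint {x y : R} : I x -> I y ->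
  f ((x + y) / 2) <= h 2^-1 * (f x + f y).
Proof.
move=> Ix Iy; have := fSX.2 x y 2^-1 Ix Iy ltac:(apply/andP; split; lra).
have -> : 1 - 2^-1 = 2^-1 :> R by field.
have -> : 2^-1 * x + 2^-1 * y = (x + y) / 2 by field.
by rewrite mulrDr.
Qed.

Lemma SX_segment_ends (a b t : R) : I a -> I b -> 0 < t < 1 ->
  f (a + (b - a) * t) + f (b + (a - b) * t) <= (f a + f b) * (h t + h (1 - t)).
Proof.
move=> Ia Ib /andP[t0 t1].
have := fSX.2 b a t Ib Ia ltac:(apply/andP; split; lra).
have := fSX.2 b a (1 - t) Ib Ia ltac:(apply/andP; split; lra).
have -> : 1 - (1 - t) = t by ring.
have -> : t * b + (1 - t) * a = a + (b - a) * t by ring.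
have -> : (1 - t) * b + t * a = b + (a - b) * t by ring.
nra.
Qed.

End h_convexity.

Theorem theorem9 (R : realType) (I J : set R) (h f : R -> R) (a b : R) :
  is_interval I -> is_interval J -> `]0, 1[ `<=` J ->
  (forall x, J x -> 0 < h x) ->
  SX h I f ->
  I a -> I b -> a < b ->
  (@lebesgue_measure R).-integrable `[a, b] (EFin \o f) ->
  forall alpha : R, 0 < alpha ->
    (((alpha * h (2^-1))^-1 * f ((a + b) / 2))%:E <=
       (Gamma alpha / (b - a) `^ alpha)%:E *
         (RL_left alpha a f b + RL_right alpha b f a))%E /\
    ((Gamma alpha / (b - a) `^ alpha)%:E *
         (RL_left alpha a f b + RL_right alpha b f a) <=
       (f a + f b)%:E *
         \int[@lebesgue_measure R]_(t in `]0%R, 1%R[)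
            (t `^ (alpha - 1) * (h t + h (1 - t)))%:E)%E.
Proof.
move=> Iitv _ sJ hpos fSX Ia Ib ab /integrableP[/measurable_EFinP mf _] al al0.
have Iab x : a <= x <= b -> I x by exact: Iitv.
have f0 x : I x -> 0 <= f x by exact: fSX.1.
have h0 t : 0 < t < 1 -> 0 < h t by move=> t01; apply/hpos/sJ; rewrite /= in_itv.
have ends t : 0 < t < 1 -> I (a + (b - a) * t) /\ I (b + (a - b) * t).
  by move=> /(segment_points_in_itv a b t (ltW ab)) [/Iab ? /Iab ?].
have f0ab x : a <= x <= b -> 0 <= f x by move=> /Iab; exact: f0.
rewrite RL_sum_itv_oo01 //.
split.
- have h_half : 0 < h 2^-1 by apply: h0; apply/andP; split; lra.
  rewrite invfM [_ * f _]mulrC mulrA mulrAC; apply: integral_powR_itv_oo01_ge => //.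
    by rewrite divr_ge0 ?(ltW h_half) // f0ab //; apply/andP; split; lra.
  move=> t /ends[Ip Iq]; rewrite ler_pdivrMr // [_ * h _]mulrC.
  have := SX_midpoint fSX Ip Iq.
  by have -> : (a + (b - a) * t + (b + (a - b) * t)) / 2 = (a + b) / 2 by field.
- apply: integral_powR_itv_oo01_le; first exact: measurable_fun_segment_ends (ltW ab) mf.
  + by rewrite addr_ge0 ?f0.
  + by move=> t /ends[Ip Iq]; rewrite addr_ge0 ?f0.
  + move=> t /andP[t0 t1].
    have h1t : 0 < h (1 - t) by apply: h0; apply/andP; split; lra.
    by rewrite addr_ge0 ?ltW // h0 // t0.
  + by move=> t; exact: SX_segment_ends fSX a b t Ia Ib.
Qed.
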